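(* There are opinion poll instances on $2(n+1)$ agents on which the AVD mechanism, for every choice of default node, has expected additive approximation $\Omega(\sqrt{n\ln n})$.
   Context: A nomination profile on a finite agent set $N$ is a directed graph $\mathbf{x}$ on $N$ without self-loops. For $S\subseteq N$, $d_j(S,\mathbf{x})=|\{i\in S:(i,j)\text{ is an edge}\}|$; $d_j(\mathbf{x})=d_j(N\setminus\{j\},\mathbf{x})$ and $\Delta(\mathbf{x})=\max_j d_j(\mathbf{x})$. Opinion poll model: the random profile is drawn from a product distribution $\prod_{i\in N}\mathbf{P}_i$, where $\mathbf{P}_i$ is an arbitrary distribution over sets of outgoing edges of $i$ (to nodes other than $i$), independent across agents $i$. AVD with default node $t$: a non-default node $k$ beats a non-default node $j$ if $d_k(N\setminus\{j,k,t\},\mathbf{x})>d_j(N\setminus\{j,k,t\},\mathbf{x})$; a non-default $k$ beats $t$ if $d_k(N\setminus\{k,t\},\mathbf{x})>d_t(N\setminus\{k,t\},\mathbf{x})$, and $t$ beats $k$ if $d_k(N\setminus\{k,t\},\mathbf{x})<d_t(N\setminus\{k,t\},\mathbf{x})$. AVD returns the node that beats every other node if it exists, otherwise $t$. The expected additive approximation is $\mathbb{E}[\Delta(\mathbf{x})-d_w(\mathbf{x})]$ where $w$ is the winner. *)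

From HB Require Import structures.
From mathcomp Require Import all_boot all_order all_algebra.
From mathcomp Require Import all_classical all_reals all_analysis.
Set Implicit Arguments. Unset Strict Implicit. Unset Printing Implicit Defensive.
Import Order.TTheory GRing.Theory Num.Theory.

Section Nomination.
Variable N : finType.

(* A nomination profile: x i is the set of out-neighbours of agent i.
   (Self-loops are excluded by the distributions below: they give
   probability 0 to any x i containing i.) *)
Definition profile := {ffun N -> {set N}}.

Definition indeg_in (S : {set N}) (x : profile) (j : N) : nat :=
  #|[set i in S | j \in x i]|.

Definition indeg (x : profile) (j : N) : nat := indeg_in [set~ j] x j.

Definition maxdeg (x : profile) : nat := \max_(j : N) indeg x j.

Definition avd_beats (t : N) (x : profile) (k j : N) : bool :=
  if k == t then
    indeg_in (~: [set j; t]) x j < indeg_in (~: [set j; t]) x t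
  else if j == t then
    indeg_in (~: [set k; t]) x k > indeg_in (~: [set k; t]) x t
  else
    indeg_in (~: [set j; k; t]) x k > indeg_in (~: [set j; k; t]) x j.

Definition avd_winner (t : N) (x : profile) : N :=
  if [pick w | [forall j, (j != w) ==> avd_beats t x w j]] is Some w
  then w else t.

Definition opinion_poll {R : numDomainType} (P : N -> {ffun {set N} -> R}) : Prop :=
  forall i, (forall S : {set N}, 0 <= P i S)%R /\ (\sum_(S : {set N}) P i S = 1)%R
            /\ (forall S : {set N}, i \in S -> P i S = 0)%R.

Definition prof_prob {R : numDomainType} (P : N -> {ffun {set N} -> R}) (x : profile) : R :=
  (\prod_(i : N) P i (x i))%R.

Definition avd_expected_additive {R : numDomainType}
    (P : N -> {ffun {set N} -> R}) (t : N) : R :=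
  (\sum_(x : profile) prof_prob P x * (maxdeg x - indeg x (avd_winner t x))%:R)%R.

End Nomination.

From HB Require Import structures.
From mathcomp Require Import all_boot all_order all_algebra.
From mathcomp Require Import all_classical all_reals all_analysis.
From mathcomp Require Import zify ring lra.
Import Order.TTheory GRing.Theory Num.Theory.
Set Implicit Arguments. Unset Strict Implicit. Unset Printing Implicit Defensive.

(* Agents come in n+1 twin pairs {2p, 2p+1}, and every agent i has a level
   l(i) = i mod L with L ~ log2 (n+1).  Agent i tosses a fair coin b and
   nominates every agent of every other pair p whose l(i)-th binary digit
   is b.  Twins always receive the same votes, so no agent beats its twin
   and AVD returns the default node t on every profile.  Writing S_l for
   the sum of the +-1 coins of level l, pair p receives
   (#agents + sum_l (+-1)_{bit_l p} S_l) / 2 votes, up to the twins' own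
   ballots.  Since 2^L <= n+1, some pair realizes the sign pattern of
   (S_l)_l, so E[Delta - d_t] >= E[sum_l |S_l|] / 2 - 2.  A Khintchine-type
   inequality (from the second and fourth moments of Rademacher sums) gives
   E|S_l| >= sqrt(#level l) / 8, and summing over the L levels of size
   about 2n/L yields order sqrt(n L) = sqrt(n ln n). *)

Local Open Scope ring_scope.

(* A quartic upper bound of the square: it turns the second and fourth
   moment bounds into a lower bound on the first absolute moment. *)
Lemma sqr_le_abs_quartic (R : realFieldType) (S M : R) :
  0 < M -> S ^+ 2 <= M * `|S| + S ^+ 4 / M ^+ 2.
Proof.
move=> M_gt0; set a := `|S|.
have a_ge0 : 0 <= a by rewrite normr_ge0.
have sqrS : S ^+ 2 = a ^+ 2 by rewrite real_normK ?num_real.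
have -> : S ^+ 4 = (a ^+ 2) ^+ 2 by rewrite -sqrS -exprM.
rewrite sqrS.
have M2_gt0 : 0 < M ^+ 2 by rewrite exprn_gt0.
have quartic_ge0 : 0 <= (a ^+ 2) ^+ 2 / M ^+ 2 by rewrite divr_ge0 // ?exprn_ge0 // ltW.
have Ma_ge0 : 0 <= M * a by rewrite mulr_ge0 // ltW.
case: (lerP a M) => [a_le_M | M_lt_a].
  have : a ^+ 2 <= M * a by rewrite expr2 ler_wpM2r.
  lra.
have : a ^+ 2 <= (a ^+ 2) ^+ 2 / M ^+ 2.
  rewrite ler_pdivlMr // [X in _ <= X]expr2 ler_wpM2l ?exprn_ge0 //.
  by rewrite ler_pXn2r ?nnegrE // ?ltW.
lra.
Qed.

Section RademacherSums.
Variables (R : rcfType) (I : finType).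
Implicit Types (w : {ffun I -> bool}) (r : seq I).

(* Coin vectors w : I -> bool are averaged uniformly; a coin reads as +-1. *)
Definition sign (b : bool) : R := if b then 1 else -1.

Definition flip_at (a : I) w : {ffun I -> bool} :=
  [ffun i => if i == a then ~~ w i else w i].

Lemma flip_atK a : involutive (flip_at a).
Proof.
by move=> w; apply/ffunP => i; rewrite !ffunE; case: eqP => // _; rewrite negbK.
Qed.

Lemma sum_flip_odd a (h : {ffun I -> bool} -> R) :
  (forall w, h (flip_at a w) = - h w) -> \sum_w h w = 0.
Proof.
move=> h_odd.
have reindex : \sum_w h w = \sum_w h (flip_at a w).
  exact: (reindex_inj (inv_inj (flip_atK a))).
have : \sum_w h (flip_at a w) = - \sum_w h w.
  by rewrite -sumrN; apply: eq_bigr => w _; rewrite h_odd.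
lra.
Qed.

Definition rad (a : I) w : R := sign (w a).
Definition radsum r w : R := \sum_(i <- r) rad i w.

Lemma rad_flip a w : rad a (flip_at a w) = - rad a w.
Proof. by rewrite /rad ffunE eqxx; case: (w a); rewrite /= ?opprK. Qed.

Lemma rad_sqr a w : rad a w ^+ 2 = 1.
Proof. by rewrite /rad /sign; case: (w a); rewrite ?sqrrN expr1n. Qed.

Lemma sum_rad a : \sum_w rad a w = 0.
Proof. by apply: (@sum_flip_odd a) => w; rewrite rad_flip. Qed.

Lemma radsum_flip a r w : a \notin r -> radsum r (flip_at a w) = radsum r w.
Proof.
move=> a_r; apply: eq_big_seq => i i_r; rewrite /rad ffunE.
by case: eqP => // eq_ia; rewrite -eq_ia i_r in a_r.
Qed.

Lemma sum_rad_radsum a r k :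
  a \notin r -> \sum_w rad a w * radsum r w ^+ k = 0.
Proof.
move=> a_r; apply: (@sum_flip_odd a) => w.
by rewrite rad_flip radsum_flip // mulNr.
Qed.

Lemma radsum_cons a r w : radsum (a :: r) w = rad a w + radsum r w.
Proof. exact: big_cons. Qed.

Lemma sum_radsum_nil k : \sum_w radsum [::] w ^+ k.+1 = 0.
Proof. by apply: big1 => w _; rewrite /radsum big_nil expr0n. Qed.

Lemma radsum_moment2 r :
  uniq r -> \sum_w radsum r w ^+ 2 = (size r)%:R * 2 ^+ #|I|.
Proof.
elim: r => [_|a r IH /= /andP [a_r r_uniq]]; first by rewrite sum_radsum_nil mul0r.
have expand w : radsum (a :: r) w ^+ 2
           = 1 + 2 * (rad a w * radsum r w ^+ 1) + radsum r w ^+ 2.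
  by rewrite radsum_cons sqrrD rad_sqr expr1; ring.
under eq_bigr => w _ do rewrite expand.
rewrite !big_split /= -big_distrr /= sum_rad_radsum // IH //.
rewrite sumr_const card_ffun card_bool -mulr_natr mulr0 addr0 mul1r natrX.
by rewrite -[(size r).+1]addn1 natrD; ring.
Qed.

Lemma radsum_moment4 r :
  uniq r -> \sum_w radsum r w ^+ 4 <= 3 * (size r)%:R ^+ 2 * 2 ^+ #|I|.
Proof.
elim: r => [_|a r IH /= /andP [a_r r_uniq]].
  by rewrite sum_radsum_nil expr0n /= mulr0 mul0r.
have expand w : radsum (a :: r) w ^+ 4 =
  1 + 4 * (rad a w * radsum r w ^+ 1) + 6 * radsum r w ^+ 2
    + 4 * (rad a w * radsum r w ^+ 3) + radsum r w ^+ 4.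
  rewrite radsum_cons.
  have -> : (rad a w + radsum r w) ^+ 4
    = (rad a w ^+ 2) ^+ 2 + 4 * rad a w ^+ 2 * (rad a w * radsum r w)
      + 6 * rad a w ^+ 2 * radsum r w ^+ 2 + 4 * (rad a w * radsum r w ^+ 3)
      + radsum r w ^+ 4 by ring.
  by rewrite rad_sqr; ring.
under eq_bigr => w _ do rewrite expand.
rewrite !big_split /= -!big_distrr /= !sum_rad_radsum // radsum_moment2 //.
rewrite !mulr0 !addr0 sumr_const card_ffun card_bool -mulr_natr mul1r natrX.
rewrite -[(size r).+1]addn1 natrD.
set k : R := (size r)%:R; set T : R := 2 ^+ #|I|.
have T_ge0 : 0 <= T by rewrite exprn_ge0.
have k_ge0 : 0 <= k by rewrite ler0n.
have := IH r_uniq; rewrite -/k -/T.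
have -> : 3 * (k + 1) ^+ 2 * T = 3 * k ^+ 2 * T + 6 * (k * T) + 3 * T by ring.
nra.
Qed.

Lemma radsum_abs_lower r :
  uniq r -> Num.sqrt (size r)%:R / 8 * 2 ^+ #|I| <= \sum_w `|radsum r w|.
Proof.
move=> r_uniq; set k : R := (size r)%:R; set T : R := 2 ^+ #|I|.
set X := \sum_w `|radsum r w|.
have X_ge0 : 0 <= X by rewrite sumr_ge0 // => w _; rewrite normr_ge0.
have T_gt0 : 0 < T by rewrite exprn_gt0.
set q := Num.sqrt k.
have q_ge0 : 0 <= q by rewrite sqrtr_ge0.
have k_sq : k = q ^+ 2 by rewrite sqr_sqrtr // ler0n.
have [->|q_neq0] := eqVneq q 0; first by rewrite !mul0r.
have q_gt0 : 0 < q by rewrite lt_def q_neq0 q_ge0.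
have q2_gt0 : 0 < 2 * q by rewrite mulr_gt0.
have q2sq_gt0 : 0 < (2 * q) ^+ 2 by rewrite exprn_gt0.
have split_sq : \sum_w radsum r w ^+ 2
    <= 2 * q * X + (\sum_w radsum r w ^+ 4) / (2 * q) ^+ 2.
  rewrite mulr_sumr mulr_suml -big_split /=.
  by apply: ler_sum => w _; exact: sqr_le_abs_quartic.
rewrite radsum_moment2 // -/k -/T in split_sq.
have quartic : (\sum_w radsum r w ^+ 4) / (2 * q) ^+ 2 <= 3 / 4 * q ^+ 2 * T.
  have -> : 3 / 4 * q ^+ 2 * T = 3 * k ^+ 2 * T / (2 * q) ^+ 2 by rewrite k_sq; field.
  by rewrite ler_pM2r ?invr_gt0 // radsum_moment4.
have : q * (q * T) <= q * (8 * X) by rewrite k_sq in split_sq; nra.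
rewrite ler_pM2l // => qT_le.
have -> : q / 8 * T = (q * T) / 8 by ring.
lra.
Qed.

End RademacherSums.

Arguments rad {R I} a w.
Arguments radsum {R I} r w.

Definition bit (l q : nat) : bool := odd (q %/ 2 ^ l).

Lemma bits_realize (f : nat -> bool) m :
  exists2 q, (q < 2 ^ m)%N & forall l, (l < m)%N -> bit l q = f l.
Proof.
elim: m => [|m [q q_lt q_bits]]; first by exists 0%N.
exists (q + 2 ^ m * f m)%N; first by rewrite expnS; case: (f m) => /=; lia.
move=> l; rewrite ltnS leq_eqVlt => /orP [/eqP ->|l_lt].
  by rewrite /bit mulnC divnDMl ?expn_gt0 // divn_small //; case: (f m).
have -> : (2 ^ m * f m = 2 ^ (m - l) * f m * 2 ^ l)%N.
  by rewrite mulnAC -expnD subnK // ltnW.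
rewrite /bit divnDMl ?expn_gt0 // oddD oddM oddX.
have -> : (m - l == 0)%N = false by apply/eqP; lia.
by rewrite addbF; exact: q_bits.
Qed.

Lemma prod_indicator (R : comNzRingType) (I : finType) (c : I -> bool) :
  \prod_(i : I) ((c i : nat)%:R : R) = ([forall i, c i] : nat)%:R.
Proof.
case: (boolP [forall i, c i]) => [/fintype.forallP c_all|].
  by rewrite big1 // => i _; rewrite c_all.
rewrite negb_forall => /existsP [i /negbTE c_i].
by rewrite (bigD1 i) //= c_i mul0r.
Qed.

Lemma indeg_le_maxdeg {N : finType} (x : profile N) j : (indeg x j <= maxdeg x)%N.
Proof. exact: (@leq_bigmax _ (fun j => indeg x j) j). Qed.

Section Instance.
Variables (R : rcfType) (n : nat).
Local Notation N := 'I_(2 * n.+1).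
Implicit Types (w : {ffun N -> bool}) (i j t : N).

(* The number of levels, L = max(1, floor (log2 (n+1))). *)
Definition nlev : nat := (trunc_log 2 n.+1).-1.+1.

Definition pair_of i : nat := (i %/ 2)%N.
Definition level i : 'I_nlev := inord (i %% nlev).

Definition ballot i (b : bool) : {set N} :=
  [set a : N | (pair_of a != pair_of i) && (bit (level i) (pair_of a) == b)].

Definition ballot_poll i : {ffun {set N} -> R} :=
  [ffun S => (\sum_(b : bool) ((ballot i b == S) : nat)%:R) / 2].

Definition profile_of w : profile N := [ffun i => ballot i (w i)].

Lemma ballot_poll_opinion_poll : opinion_poll ballot_poll.
Proof.
move=> i; split; [|split].
- move=> S; rewrite ffunE divr_ge0 //; apply: sumr_ge0 => b _; exact: ler0n.
- under eq_bigr => S _ do rewrite ffunE.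
  rewrite -mulr_suml exchange_big /=.
  have one b : \sum_(S : {set N}) ((ballot i b == S) : nat)%:R = 1 :> R.
    rewrite (bigD1 (ballot i b)) //= eqxx big1 ?addr0 //.
    by move=> S; rewrite eq_sym => /negbTE ->.
  under eq_bigr => b _ do rewrite one.
  by rewrite sumr_const card_bool divff.
- move=> S i_S; rewrite ffunE big1 ?mul0r // => b _.
  by case: eqP => // eq_S; move: i_S; rewrite -eq_S inE eqxx.
Qed.

Lemma expectation_coins (h : profile N -> R) :
  \sum_(x : profile N) prof_prob ballot_poll x * h x
  = (\sum_w h (profile_of w)) / 2 ^+ #|N|.
Proof.
have prob x : prof_prob ballot_poll x
              = (\sum_w ((profile_of w == x) : nat)%:R) / 2 ^+ #|N|.
  rewrite /prof_prob; under eq_bigr => i _ do rewrite ffunE.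
  rewrite big_split /= prodr_const -exprVn bigA_distr_bigA /=; congr (_ * _).
  apply: eq_bigr => w _; rewrite prod_indicator; congr ((nat_of_bool _)%:R).
  apply/fintype.forallP/eqP => [w_x|<- i]; last by rewrite ffunE.
  by apply/ffunP => i; rewrite ffunE; apply/eqP.
under eq_bigr => x _ do rewrite prob mulrAC big_distrl /=.
rewrite -big_distrl /= exchange_big /=; congr (_ * _).
apply: eq_bigr => w _; rewrite (bigD1 (profile_of w)) //= eqxx mul1r big1 ?addr0 //.
by move=> x /negbTE; rewrite eq_sym => ->; rewrite mul0r.
Qed.

Definition twin_nat (j : nat) : nat := if odd j then j.-1 else j.+1.

Lemma twin_lt j : (twin_nat j < 2 * n.+1)%N.
Proof. rewrite /twin_nat; have := ltn_ord j; case: ifP; lia. Qed.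

Definition twin j : N := Ordinal (twin_lt j).

Lemma pair_of_twin j : pair_of (twin j) = pair_of j.
Proof. rewrite /pair_of /= /twin_nat; case: ifP; lia. Qed.

Lemma twin_neq j : twin j != j.
Proof. by apply/eqP => /(congr1 val); rewrite /= /twin_nat; case: ifP; lia. Qed.

Lemma same_pair (i j : N) : pair_of i = pair_of j -> i = j \/ i = twin j.
Proof.
rewrite /pair_of => same_half; case: (eqVneq i j) => [|neq_ij]; first by left.
have neq_val : (i : nat) <> j by move=> /val_inj eq_ij; rewrite eq_ij eqxx in neq_ij.
by right; apply: val_inj; rewrite /= /twin_nat; case: ifP; lia.
Qed.

Lemma indeg_in_twin w S j :
  indeg_in S (profile_of w) (twin j) = indeg_in S (profile_of w) j.
Proof.
by apply: eq_card => i; rewrite !inE !ffunE !inE pair_of_twin.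
Qed.

(* Nobody beats its twin, so AVD always falls back to the default node. *)
Lemma avd_winner_default t w : avd_winner t (profile_of w) = t.
Proof.
rewrite /avd_winner; case: pickP => [v /fintype.forallP v_wins|] //.
apply/eqP; apply: contraT => v_neq_t.
have := v_wins (twin v); rewrite twin_neq /= /avd_beats (negbTE v_neq_t).
by case: eqP => [<-|_]; rewrite indeg_in_twin ltnn.
Qed.

(* votes q w: the number of agents whose ballot contains the pair q (agents
   of the pair q itself included). *)
Definition votes (q : nat) w : nat := #|[set i : N | bit (level i) q == w i]|.

Lemma indeg_le_votes w j : (indeg (profile_of w) j <= votes (pair_of j) w)%N.
Proof.
apply: subset_leq_card; apply/fintype.subsetP => i.
by rewrite !inE ffunE !inE => /andP [_ /andP [_ ->]].
Qed.

(* Only the two members of pair j can vote for it without counting in d_j. *)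
Lemma votes_le_indeg w j : (votes (pair_of j) w <= indeg (profile_of w) j + 2)%N.
Proof.
apply: (@leq_trans #|[set i in [set~ j] | j \in profile_of w i] :|: [set j; twin j]|).
  apply: subset_leq_card; apply/fintype.subsetP => i; rewrite !inE ffunE !inE => i_votes.
  case: (eqVneq (pair_of j) (pair_of i)) => [/esym /same_pair [->|->]|pair_neq].
  - by rewrite eqxx orbT.
  - by rewrite eqxx !orbT.
  - rewrite i_votes /= andbT; apply/orP; left.
    by apply: contraNneq pair_neq => ->.
by rewrite cardsU (leq_trans (leq_subr _ _)) // leq_add2l cards2; case: (_ != _).
Qed.

Definition level_class (l : 'I_nlev) : {set N} := [set i : N | level i == l].
Definition level_sum (l : 'I_nlev) w : R := radsum (enum (level_class l)) w.

Lemma indicator_sign (b c : bool) :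
  ((b == c) : nat)%:R = (1 + sign R b * sign R c) / 2 :> R.
Proof. by case: b; case: c; rewrite /sign /=; field. Qed.

Lemma votes_levels q w : (votes q w)%:R =
  ((2 * n.+1)%:R + \sum_(l : 'I_nlev) sign R (bit l q) * level_sum l w) / 2 :> R.
Proof.
have if_nat (b : bool) : (if b then 1 else 0 : R) = (b : nat)%:R by case: b.
rewrite /votes -sum1_card natr_sum big_mkcond /=.
under eq_bigr => i _ do rewrite inE if_nat indicator_sign.
rewrite -mulr_suml big_split /= sumr_const card_ord; congr ((_ + _) / 2).
rewrite (partition_big level predT) //=; apply: eq_bigr => l _.
rewrite /level_sum /radsum big_enum big_distrr /=.
by apply: eq_big => [i|i /eqP <-]; rewrite ?inE.
Qed.

Lemma exp_nlev_le (n_gt0 : (0 < n)%N) : (2 ^ nlev <= n.+1)%N.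
Proof.
have log_gt0 : (0 < trunc_log 2 n.+1)%N by rewrite trunc_log_gt0 /= ltnS.
by rewrite /nlev prednK // trunc_logP.
Qed.

Lemma best_pair (n_gt0 : (0 < n)%N) w : exists2 q : nat, (q < n.+1)%N &
  \sum_(l : 'I_nlev) sign R (bit l q) * level_sum l w
  = \sum_(l : 'I_nlev) `|level_sum l w|.
Proof.
have [q q_lt q_bits] := bits_realize (fun l => 0 <= level_sum (inord l) w) nlev.
exists q; first exact: leq_trans q_lt (exp_nlev_le n_gt0).
apply: eq_bigr => l _; rewrite q_bits // inord_val /sign.
by case: lerP => S_sign; [rewrite ger0_norm // mul1r | rewrite ltr0_norm // mulN1r].
Qed.

Lemma loss_lower (n_gt0 : (0 < n)%N) t w :
  (\sum_(l : 'I_nlev) `|level_sum l w|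
     - \sum_(l : 'I_nlev) sign R (bit l (pair_of t)) * level_sum l w) / 2 - 2
  <= ((maxdeg (profile_of w) - indeg (profile_of w) t)%N)%:R.
Proof.
have [q q_lt best] := best_pair n_gt0 w.
have a_lt : (2 * q < 2 * n.+1)%N by lia.
pose a : N := Ordinal a_lt.
have pair_a : pair_of a = q by rewrite /pair_of /=; lia.
have votes_a := votes_le_indeg w a; rewrite pair_a in votes_a.
have a_max := indeg_le_maxdeg (profile_of w) a.
have t_max := indeg_le_maxdeg (profile_of w) t.
have votes_q : (votes q w)%:R <= (maxdeg (profile_of w))%:R + 2 :> R.
  by rewrite -[2]/(2%:R) -natrD ler_nat (leq_trans votes_a) // leq_add2r.
have votes_t : (indeg (profile_of w) t)%:R <= (votes (pair_of t) w)%:R :> R.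
  by rewrite ler_nat indeg_le_votes.
rewrite !votes_levels best in votes_q votes_t.
rewrite natrB //; lra.
Qed.

Lemma sum_level_sum l : \sum_w level_sum l w = 0.
Proof. by rewrite /level_sum /radsum exchange_big big1 // => i _; exact: sum_rad. Qed.

Lemma expected_loss_lower (n_gt0 : (0 < n)%N) t :
  \sum_(l : 'I_nlev) Num.sqrt (#|level_class l|%:R) / 16 - 2
  <= avd_expected_additive ballot_poll t.
Proof.
rewrite /avd_expected_additive
  (expectation_coins (fun x => ((maxdeg x - indeg x (avd_winner t x))%N)%:R)).
rewrite (eq_bigr (fun w => ((maxdeg (profile_of w) - indeg (profile_of w) t)%N)%:R));
  last by move=> w _; rewrite avd_winner_default.
set T : R := 2 ^+ #|N|.
have T_gt0 : 0 < T by rewrite exprn_gt0.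
rewrite ler_pdivlMr //; apply: le_trans (ler_sum _ (fun w _ => loss_lower n_gt0 t w)).
have centred : \sum_w \sum_(l : 'I_nlev) sign R (bit l (pair_of t)) * level_sum l w = 0.
  by rewrite exchange_big big1 // => l _; rewrite -mulr_sumr sum_level_sum mulr0.
have khintchine : \sum_(l : 'I_nlev) Num.sqrt (#|level_class l|%:R) / 8 * T
                  <= \sum_w \sum_(l : 'I_nlev) `|level_sum l w|.
  rewrite exchange_big; apply: ler_sum => l _.
  by rewrite cardE; apply: radsum_abs_lower; exact: enum_uniq.
rewrite sumrB -!mulr_suml sumrB centred subr0 sumr_const card_ffun card_bool.
have -> : (2 *+ 2 ^ #|N| : R) = 2 * T by rewrite /T -mulr_natr natrX.
rewrite -!mulr_suml in khintchine.
lra.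
Qed.

Lemma level_class_card l : ((2 * n.+1) %/ nlev <= #|level_class l|)%N.
Proof.
set m := ((2 * n.+1) %/ nlev)%N.
have m_le : (m * nlev <= 2 * n.+1)%N by exact: leq_divM.
have agent_lt (k : 'I_m) : (l + nlev * k < 2 * n.+1)%N.
  have k_lt : (nlev * k.+1 <= nlev * m)%N by rewrite leq_mul2l ltn_ord orbT.
  have := ltn_ord l; rewrite mulnS in k_lt; rewrite mulnC in m_le; lia.
pose agent (k : 'I_m) : N := Ordinal (agent_lt k).
have agent_inj : injective agent.
  move=> k1 k2 /(congr1 val) /= /eqP; rewrite eqn_add2l eqn_mul2l /= => /eqP eq_k.
  exact: ord_inj.
rewrite -[m in (m <= _)%N]card_ord -(card_imset _ agent_inj); apply: subset_leq_card.
apply/fintype.subsetP => _ /imsetP [k _ ->]; rewrite inE /level /=.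
by rewrite addnC mulnC modnMDl modn_small ?ltn_ord // inord_val.
Qed.

End Instance.

Lemma nlev_classes_cover n (n_gt0 : (0 < n)%N) :
  (n <= nlev n * ((2 * n.+1) %/ nlev n))%N.
Proof.
have L_lt : (nlev n < 2 ^ nlev n)%N by rewrite ltn_expl.
have := exp_nlev_le n_gt0; have := divn_eq (2 * n.+1) (nlev n).
have : ((2 * n.+1) %% nlev n < nlev n)%N by rewrite ltn_pmod.
rewrite mulnC; lia.
Qed.

Lemma lt_exp_nlev n (n_gt0 : (0 < n)%N) : (n.+1 < 2 ^ (nlev n).+1)%N.
Proof.
have log_gt0 : (0 < trunc_log 2 n.+1)%N by rewrite trunc_log_gt0 /= ltnS.
by rewrite /nlev prednK //; apply: trunc_log_ltn.
Qed.

(* ln n <= 2 L as soon as n <= 2^L (because ln 2 < 2). *)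
Lemma ln_le_log2 (R : realType) (n L : nat) :
  (0 < n)%N -> (n <= 2 ^ L)%N -> ln (n%:R : R) <= 2 * L%:R.
Proof.
move=> n_gt0 n_le.
have ln_mono : ln (n%:R : R) <= ln (2 ^+ L) by rewrite ler_ln ?posrE ?ltr0n ?exprn_gt0 // -natrX ler_nat.
rewrite lnXn // -[ln 2 *+ L]mulr_natr in ln_mono; apply: le_trans ln_mono _.
by rewrite ler_wpM2r ?ler0n // ltW // ln_sublinear.
Qed.

Lemma sqrt_nlogn_le (R : realType) (n L m : nat) :
  (1 <= L)%N -> (n <= L * m)%N -> ln (n%:R : R) <= 2 * (L%:R + 1) ->
  Num.sqrt (n%:R * ln (n%:R : R)) <= 2 * (L%:R * Num.sqrt m%:R).
Proof.
move=> L_ge1 n_le ln_le.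
have [n0|n_gt0] := posnP n; first by rewrite n0 mul0r sqrtr0 mulr_ge0 ?mulr_ge0 ?sqrtr_ge0.
have lnR : 0 <= ln (n%:R : R) by rewrite ln_ge0 // ler1n.
have LR : 1 <= L%:R :> R by rewrite ler1n.
have nLm : n%:R <= L%:R * m%:R :> R by rewrite -natrM ler_nat.
have n0 : 0 <= n%:R :> R by rewrite ler0n.
have m0 : 0 <= m%:R :> R by rewrite ler0n.
rewrite -(@ler_pXn2r _ 2) ?nnegrE ?sqrtr_ge0 ?mulr_ge0 ?ler0n //.
rewrite sqr_sqrtr ?mulr_ge0 // exprMn exprMn sqr_sqrtr //.
have step1 : n%:R * ln (n%:R : R) <= n%:R * (2 * (L%:R + 1)) by rewrite ler_wpM2l.
have step2 : n%:R * (2 * (L%:R + 1)) <= 4 * (L%:R * n%:R) :> R by nra.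
have step3 : L%:R * n%:R <= L%:R ^+ 2 * m%:R :> R by rewrite expr2 -mulrA ler_wpM2l ?ler0n.
lra.
Qed.

Lemma level_bound_dominates (R : realType) n : (4096 <= n)%N ->
  1 / 64 * Num.sqrt (n%:R * ln (n%:R : R))
  <= \sum_(l : 'I_(nlev n)) Num.sqrt (#|level_class l|%:R : R) / 16 - 2.
Proof.
move=> n_ge; have n_gt0 : (0 < n)%N by lia.
set m := ((2 * n.+1) %/ nlev n)%N; set L := nlev n.
have cover : (n <= L * m)%N := nlev_classes_cover n_gt0.
set Y : R := L%:R * Num.sqrt m%:R.
have sum_ge : Y <= \sum_(l : 'I_L) Num.sqrt (#|level_class l|%:R).
  have -> : Y = \sum_(l : 'I_L) Num.sqrt m%:R by rewrite sumr_const card_ord /Y mulr_natl.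
  by apply: ler_sum => l _; rewrite ler_sqrt ?ler0n // ler_nat level_class_card.
have ln_le : ln (n%:R : R) <= 2 * (L%:R + 1).
  rewrite natr1; apply: ln_le_log2 => //; exact: leq_trans (leqnSn n) (ltnW (lt_exp_nlev n_gt0)).
have Z_le := sqrt_nlogn_le (erefl (0 < L)%N) cover ln_le; rewrite -/Y in Z_le.
have Y_ge : 64 <= Y.
  have m0 : 0 <= m%:R :> R by rewrite ler0n.
  rewrite -(@ler_pXn2r _ 2) ?nnegrE ?mulr_ge0 ?sqrtr_ge0 ?ler0n //.
  rewrite exprMn sqr_sqrtr //.
  have : 4096 <= L%:R * m%:R :> R by rewrite -natrM ler_nat (leq_trans n_ge).
  have : L%:R * m%:R <= L%:R ^+ 2 * m%:R :> R.
    by rewrite expr2 -mulrA ler_peMl ?mulr_ge0 ?ler0n // ler1n.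
  lra.
rewrite -mulr_suml; lra.
Qed.

Theorem mainTheorem18 (R : realType) :
  exists c : R, (0 < c)%R /\
  exists n0 : nat, forall n : nat, (n0 <= n)%N ->
    exists P : 'I_(2 * n.+1) -> {ffun {set 'I_(2 * n.+1)} -> R},
      opinion_poll P /\
      forall t : 'I_(2 * n.+1),
        (c * Num.sqrt (n%:R * ln (n%:R : R)) <= avd_expected_additive P t)%R.
Proof.
exists (1 / 64); split; first by rewrite divr_gt0.
exists 4096%N => n n_ge.
exists (@ballot_poll R n); split; first exact: ballot_poll_opinion_poll.
move=> t; apply: le_trans (level_bound_dominates R n_ge) _.
by apply: expected_loss_lower; lia.
Qed.
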